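(* There is an absolute constant $C$ such that for every $0<\gamma<\frac1{15}$ there is $Q_0(\gamma)$ with the following property: for all $\zeta_1,\zeta_2\in[-1,1]$ and every integer $Q\ge Q_0(\gamma)$ there exist an integer $1\le q\le Q$ and $a=(a_1,a_2)\in\mathbb{Z}^2$ with $$\max_{j=1,2}\Big|\zeta_j-\frac{a_j}{q}\Big|\le\frac{C}{q^{1/2}Q^{\frac12+\gamma}}.$$ *)

From Stdlib Require Import Reals Lra Lia ZArith.

From Stdlib Require Import Reals ZArith Lra Lia List Wf_nat Classical.
Open Scope R_scope.

(* Let n = floor(Q^(1/5)), N = n^2 and k = n.  Dirichlet's box argument with
   k N^2 <= Q denominators and N^2 boxes gives k distinct denominators d with
   |d zeta_j - a_j| < 1/N.  If two of them carry non-proportional approximations,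
   their sum exceeds N, so one of them has q > N/2, and an error 1/N at such a q
   is of order 1/(sqrt q Q^(3/5)).  Otherwise they are all multiples t (m, c) of a
   single approximation with distinct t, so some t >= k and m approximates with
   error < 1/(N k) = 1/n^3.  Finally Q^(1/2 + gamma) <= Q^(3/5) as gamma < 1/10. *)

Lemma pigeonhole_fiber {A : Type} (f : A -> nat) (k B : nat) (l : list A) :
  (forall x, In x l -> (f x < B)%nat) -> (k * B < length l)%nat ->
  exists b, (k < length (filter (fun x => Nat.eqb (f x) b) l))%nat.
Proof.
  revert l; induction B as [|B IH]; intros l Hf Hlen.
  - destruct l as [|x l]; [simpl in Hlen; lia|].
    specialize (Hf x (or_introl eq_refl)); lia.
  - destruct (Nat.lt_ge_cases k (length (filter (fun x => Nat.eqb (f x) B) l)))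
      as [HB|HB]; [now exists B|].
    pose proof (filter_length (fun x => Nat.eqb (f x) B) l) as Hsplit.
    destruct (IH (filter (fun x => negb (Nat.eqb (f x) B)) l)) as [b Hb].
    + intros x [Hx HxB]%filter_In.
      apply Bool.negb_true_iff, Nat.eqb_neq in HxB. specialize (Hf x Hx); lia.
    + nia.
    + exists b. eapply Nat.lt_le_trans; [exact Hb|].
      clear. induction l as [|x l IH]; simpl; [lia|].
      destruct (Nat.eqb (f x) B); destruct (Nat.eqb (f x) b) eqn:E; simpl;
        rewrite ?E; simpl; lia.
Qed.

Lemma filter_seq_head_lt (p : nat -> bool) (n s q0 : nat) (l : list nat) :
  filter p (seq s n) = q0 :: l -> forall x, In x l -> (q0 < x)%nat.
Proof.
  revert s; induction n as [|n IH]; intros s Hf x Hx; simpl in Hf; [discriminate|].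
  destruct (p s).
  - injection Hf as <- <-. apply filter_In in Hx as [Hx _]. apply in_seq in Hx. lia.
  - exact (IH _ Hf x Hx).
Qed.

Lemma NoDup_pos_exists_ge (l : list nat) (k : nat) :
  NoDup l -> (k <= length l)%nat -> (forall t, In t l -> (1 <= t)%nat) ->
  (1 <= k)%nat -> exists t, In t l /\ (k <= t)%nat.
Proof.
  intros Hnd Hlen Hpos Hk.
  apply NNPP; intros Hsmall.
  assert (Hincl : incl l (seq 1 (k - 1))).
  { intros t Ht. apply in_seq. specialize (Hpos t Ht).
    destruct (Nat.lt_ge_cases t k); [lia|]. exfalso; eauto. }
  pose proof (NoDup_incl_length Hnd Hincl). rewrite length_seq in *. lia.
Qed.

Lemma Int_part_nat_bounds (y : R) (N : nat) : 0 <= y < INR N ->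
  (0 <= Int_part y < Z.of_nat N)%Z.
Proof.
  intros Hy. destruct (base_Int_part y) as [H1 H2]. split.
  - assert (-1 < Int_part y)%Z by (apply lt_IZR; lra). lia.
  - apply lt_IZR. rewrite <- INR_IZR_INZ. lra.
Qed.

Lemma frac_part_scaled_bounds (N : nat) (x : R) : (0 < N)%nat ->
  0 <= INR N * frac_part x < INR N.
Proof. intros HN. pose proof (base_fp x). pose proof (lt_0_INR N HN). nra. Qed.

Definition cell (N : nat) (z : R) (q : nat) : nat :=
  Z.to_nat (Int_part (INR N * frac_part (INR q * z))).

Lemma cell_lt (N : nat) (z : R) (q : nat) : (0 < N)%nat -> (cell N z q < N)%nat.
Proof.
  intros HN. unfold cell.
  pose proof (Int_part_nat_bounds _ _ (frac_part_scaled_bounds N (INR q * z) HN)).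
  lia.
Qed.

Lemma cell_eq_frac_close (N : nat) (z : R) (q q' : nat) : (0 < N)%nat ->
  cell N z q = cell N z q' ->
  Rabs (frac_part (INR q * z) - frac_part (INR q' * z)) < / INR N.
Proof.
  intros HN Heq. unfold cell in Heq.
  pose proof (lt_0_INR N HN) as HN'.
  pose proof (frac_part_scaled_bounds N (INR q * z) HN) as Hf.
  pose proof (frac_part_scaled_bounds N (INR q' * z) HN) as Hf'.
  pose proof (Int_part_nat_bounds _ _ Hf). pose proof (Int_part_nat_bounds _ _ Hf').
  set (f := frac_part (INR q * z)) in *; set (f' := frac_part (INR q' * z)) in *.
  apply Z2Nat.inj in Heq; try lia.
  destruct (base_Int_part (INR N * f)) as [B1 B2].
  destruct (base_Int_part (INR N * f')) as [C1 C2]. rewrite Heq in B1, B2.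
  assert (Habs : Rabs (INR N * (f - f')) < 1) by (apply Rabs_def1; lra).
  rewrite Rabs_mult, Rabs_pos_eq in Habs by lra.
  apply (Rmult_lt_reg_l (INR N)); [lra|]. rewrite Rinv_r; lra.
Qed.

Lemma Int_part_sub_approx (z : R) (x y : nat) : (y <= x)%nat ->
  INR (x - y) * z - IZR (Int_part (INR x * z) - Int_part (INR y * z)) =
  frac_part (INR x * z) - frac_part (INR y * z).
Proof.
  intros H. unfold frac_part. rewrite minus_INR, minus_IZR by exact H. ring.
Qed.

Definition sim_approx (e z1 z2 : R) (d : nat) (a1 a2 : Z) : Prop :=
  Rabs (INR d * z1 - IZR a1) < e /\ Rabs (INR d * z2 - IZR a2) < e.

(* Some box holds [k + 1] points [q0 < x]; the differences [x - q0] are the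
   [k] good denominators. *)
Lemma many_sim_approx (z1 z2 : R) (N k : nat) : (0 < N)%nat ->
  exists (L : list nat) (a1 a2 : nat -> Z),
    NoDup L /\ (k <= length L)%nat /\
    forall d, In d L ->
      (1 <= d <= k * N * N)%nat /\ sim_approx (/ INR N) z1 z2 d (a1 d) (a2 d).
Proof.
  intros HN.
  set (box q := (N * cell N z1 q + cell N z2 q)%nat).
  set (l := seq 0 (S (k * N * N))).
  destruct (pigeonhole_fiber box k (N * N) l) as [b Hb].
  { intros x _. pose proof (cell_lt N z1 x HN). pose proof (cell_lt N z2 x HN).
    unfold box. nia. }
  { unfold l. rewrite length_seq. nia. }
  destruct (filter (fun x => Nat.eqb (box x) b) l) as [|q0 F] eqn:EF;
    [simpl in Hb; lia|].
  assert (HF : forall x, In x (q0 :: F) -> box x = b /\ (x <= k * N * N)%nat).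
  { intros x Hx. rewrite <- EF in Hx. apply filter_In in Hx as [Hx Hxb].
    apply Nat.eqb_eq in Hxb. apply in_seq in Hx. split; [exact Hxb|lia]. }
  assert (HFnd : NoDup (q0 :: F)) by (rewrite <- EF; apply NoDup_filter, seq_NoDup).
  pose proof (filter_seq_head_lt _ _ _ _ _ EF) as Hgt.
  exists (map (fun x => x - q0)%nat F),
    (fun d => Int_part (INR (q0 + d) * z1) - Int_part (INR q0 * z1))%Z,
    (fun d => Int_part (INR (q0 + d) * z2) - Int_part (INR q0 * z2))%Z.
  split; [|split].
  - apply NoDup_map_NoDup_ForallPairs; [|now inversion HFnd].
    intros x y Hx Hy Hxy. pose proof (Hgt x Hx). pose proof (Hgt y Hy). lia.
  - rewrite length_map. simpl in Hb. lia.
  - intros d [x [<- Hx]]%in_map_iff.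
    pose proof (Hgt x Hx) as Hq0x.
    destruct (HF x (or_intror Hx)) as [Bx Hxle]. destruct (HF q0 (or_introl eq_refl)) as [B0 _].
    rewrite <- B0 in Bx. unfold box in Bx.
    destruct (Nat.div_mod_unique N _ _ _ _ (cell_lt N z2 x HN) (cell_lt N z2 q0 HN) Bx)
      as [E1 E2].
    replace (q0 + (x - q0))%nat with x by lia.
    split; [lia|]. unfold sim_approx. rewrite !Int_part_sub_approx by lia.
    split; apply cell_eq_frac_close; assumption.
Qed.

(* [v a - u b] is a nonzero integer, and it equals [u (v z - b) - v (u z - a)]. *)
Lemma non_proportional_approx_sum_gt (z : R) (N u v : nat) (a b : Z) :
  (0 < N)%nat -> (0 < u)%nat ->
  Rabs (INR u * z - IZR a) < / INR N -> Rabs (INR v * z - IZR b) < / INR N ->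
  (Z.of_nat v * a <> Z.of_nat u * b)%Z -> (N < u + v)%nat.
Proof.
  intros HN Hu Ha Hb Hne.
  pose proof (lt_0_INR N HN) as HN'. pose proof (lt_0_INR u Hu) as Hu'.
  pose proof (pos_INR v) as Hv'.
  assert (Hint : 1 <= Rabs (IZR (Z.of_nat v * a - Z.of_nat u * b))).
  { rewrite <- abs_IZR. apply IZR_le. lia. }
  replace (IZR (Z.of_nat v * a - Z.of_nat u * b))
    with (INR u * (INR v * z - IZR b) - INR v * (INR u * z - IZR a)) in Hint
    by (rewrite minus_IZR, !mult_IZR, <- !INR_IZR_INZ; ring).
  assert (Htri : Rabs (INR u * (INR v * z - IZR b) - INR v * (INR u * z - IZR a))
      <= INR u * Rabs (INR v * z - IZR b) + INR v * Rabs (INR u * z - IZR a)).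
  { eapply Rle_trans; [apply Rabs_triang|].
    rewrite Rabs_Ropp, !Rabs_mult, (Rabs_pos_eq (INR u)), (Rabs_pos_eq (INR v)) by lra.
    lra. }
  assert (Hsum : 1 < (INR u + INR v) * / INR N).
  { pose proof (Rabs_pos (INR u * z - IZR a)). nra. }
  apply INR_lt. rewrite plus_INR.
  apply (Rmult_lt_reg_r (/ INR N)); [now apply Rinv_0_lt_compat|].
  rewrite Rinv_r; lra.
Qed.

(* [m] is the least positive integer with [m (b1, b2) / u] integral; the [d] with
   [d (b1, b2) / u] integral form the subgroup [m Z]. *)
Lemma common_denominator (u : nat) (b1 b2 : Z) : (0 < u)%nat ->
  exists (m : nat) (c1 c2 : Z),
    (0 < m <= u)%nat /\
    (Z.of_nat m * b1 = Z.of_nat u * c1)%Z /\ (Z.of_nat m * b2 = Z.of_nat u * c2)%Z /\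
    forall (d : nat) (a1 a2 : Z),
      (Z.of_nat d * b1 = Z.of_nat u * a1)%Z -> (Z.of_nat d * b2 = Z.of_nat u * a2)%Z ->
      exists t : nat, d = (t * m)%nat /\ a1 = (Z.of_nat t * c1)%Z /\ a2 = (Z.of_nat t * c2)%Z.
Proof.
  intros Hu.
  set (P m := (0 < m)%nat /\ exists c1 c2 : Z,
      (Z.of_nat m * b1 = Z.of_nat u * c1)%Z /\ (Z.of_nat m * b2 = Z.of_nat u * c2)%Z).
  assert (Pu : P u) by (split; [exact Hu|]; exists b1, b2; split; ring).
  destruct (dec_inh_nat_subset_has_unique_least_element P (fun n => classic (P n))
              (ex_intro _ u Pu)) as [m [[[Hm [c1 [c2 [Hc1 Hc2]]]] Hmin] _]].
  exists m, c1, c2. split; [split; [exact Hm|exact (Hmin u Pu)]|]. do 2 (split; [assumption|]).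
  intros d a1 a2 Ha1 Ha2.
  pose proof (Nat.div_mod d m ltac:(lia)) as Hdm.
  pose proof (Nat.mod_upper_bound d m ltac:(lia)) as Hmod.
  set (t := (d / m)%nat) in *; set (s := (d mod m)%nat) in *.
  assert (Hs : s = 0%nat).
  { apply NNPP; intros Hs.
    assert (Ps : P s).
    { split; [lia|]. exists (a1 - Z.of_nat t * c1)%Z, (a2 - Z.of_nat t * c2)%Z.
      replace (Z.of_nat s) with (Z.of_nat d - Z.of_nat m * Z.of_nat t)%Z by lia.
      split; nia. }
    specialize (Hmin s Ps). lia. }
  rewrite Hs, Nat.add_0_r in Hdm.
  exists t. split; [lia|].
  assert (Hu0 : Z.of_nat u <> 0%Z) by lia.
  rewrite Hdm, Nat2Z.inj_mul in Ha1, Ha2.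
  split; apply (Z.mul_cancel_l _ _ _ Hu0); nia.
Qed.

Lemma Rabs_scaled_lt (t k : nat) (e D : R) : (1 <= k <= t)%nat -> 0 < D ->
  Rabs (INR t * e) < / D -> Rabs e < / (D * INR k).
Proof.
  intros Hkt HD H. rewrite Rabs_mult, Rabs_pos_eq in H by apply pos_INR.
  assert (Hk : 1 <= INR k) by (apply (le_INR 1); lia).
  assert (Ht : INR k <= INR t) by (apply le_INR; lia).
  apply (Rmult_lt_reg_l (D * INR k)); [nra|].
  rewrite Rinv_r by nra.
  apply (Rmult_lt_compat_l D) in H; [|lra]. rewrite Rinv_r in H by lra.
  pose proof (Rabs_pos e). nra.
Qed.

Lemma multiples_refine_sim_approx (z1 z2 : R) (N k m : nat) (c1 c2 : Z)
    (L : list nat) (a1 a2 : nat -> Z) :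
  (0 < N)%nat -> (1 <= k)%nat -> NoDup L -> (k <= length L)%nat ->
  (forall d, In d L -> (1 <= d)%nat /\ sim_approx (/ INR N) z1 z2 d (a1 d) (a2 d) /\
     exists t : nat, d = (t * m)%nat /\ a1 d = (Z.of_nat t * c1)%Z /\ a2 d = (Z.of_nat t * c2)%Z) ->
  sim_approx (/ (INR N * INR k)) z1 z2 m c1 c2.
Proof.
  intros HN Hk Hnd Hlen HL. unfold sim_approx in *.
  assert (Hmult : forall d, In d L -> d = (d / m * m)%nat /\ (1 <= d / m)%nat /\
      sim_approx (/ INR N) z1 z2 d (Z.of_nat (d / m) * c1) (Z.of_nat (d / m) * c2)).
  { intros d Hd. destruct (HL d Hd) as [Hd1 [Happ [t [-> [E1 E2]]]]].
    destruct m as [|m]; [lia|]. rewrite Nat.div_mul by lia.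
    rewrite <- E1, <- E2. split; [reflexivity|]. split; [lia|exact Happ]. }
  destruct (NoDup_pos_exists_ge (map (fun d => d / m)%nat L) k) as [t [Ht Hkt]];
    [| now rewrite length_map | | exact Hk |].
  { apply NoDup_map_NoDup_ForallPairs; [|exact Hnd].
    intros x y Hx Hy Hxy. rewrite (proj1 (Hmult x Hx)), (proj1 (Hmult y Hy)), Hxy.
    reflexivity. }
  { intros t [d [<- Hd]]%in_map_iff. apply (Hmult d Hd). }
  apply in_map_iff in Ht as [d [<- Hd]]. destruct (Hmult d Hd) as [Ed [_ [E1 E2]]].
  set (t := (d / m)%nat) in *. rewrite Ed, mult_INR, !mult_IZR, <- !INR_IZR_INZ in E1, E2.
  pose proof (lt_0_INR N HN).
  split; apply (Rabs_scaled_lt t); try lia; try lra.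
  - replace (INR t * (INR m * z1 - IZR c1)) with (INR t * INR m * z1 - INR t * IZR c1)
      by ring. exact E1.
  - replace (INR t * (INR m * z2 - IZR c2)) with (INR t * INR m * z2 - INR t * IZR c2)
      by ring. exact E2.
Qed.

Lemma large_or_refined_denominator (z1 z2 : R) (N k : nat) :
  (0 < N)%nat -> (0 < k)%nat ->
  exists (q : nat) (a1 a2 : Z), (1 <= q <= k * N * N)%nat /\
    ((N < 2 * q)%nat /\ sim_approx (/ INR N) z1 z2 q a1 a2 \/
     sim_approx (/ (INR N * INR k)) z1 z2 q a1 a2).
Proof.
  intros HN Hk.
  destruct (many_sim_approx z1 z2 N k HN) as [L [a1 [a2 [Hnd [Hlen HL]]]]].
  destruct L as [|u rest]; [simpl in Hlen; lia|].
  destruct (HL u (or_introl eq_refl)) as [Hu [Hu1 Hu2]].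
  set (proportional v := (Z.of_nat v * a1 u = Z.of_nat u * a1 v)%Z /\
                         (Z.of_nat v * a2 u = Z.of_nat u * a2 v)%Z).
  destruct (classic (forall v, In v (u :: rest) -> proportional v)) as [Hprop|Hnprop].
  - destruct (common_denominator u (a1 u) (a2 u) ltac:(lia))
      as [m [c1 [c2 [Hm [_ [_ Hmult]]]]]].
    exists m, c1, c2. split; [lia|]. right.
    apply (multiples_refine_sim_approx z1 z2 N k m c1 c2 (u :: rest) a1 a2);
      try assumption; try lia.
    intros d Hd. destruct (HL d Hd) as [Hd1 Happ]. split; [lia|]. split; [exact Happ|].
    apply Hmult; apply Hprop, Hd.
  - apply not_all_ex_not in Hnprop as [v Hv].
    apply imply_to_and in Hv as [Hv Hnp].
    destruct (HL v Hv) as [Hv1 [Hv1' Hv2']].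
    assert (Huv : (N < u + v)%nat).
    { apply not_and_or in Hnp as [Hne|Hne];
        [apply (non_proportional_approx_sum_gt z1 N u v (a1 u) (a1 v))
        |apply (non_proportional_approx_sum_gt z2 N u v (a2 u) (a2 v))];
        solve [assumption | lia]. }
    destruct (Nat.lt_ge_cases N (2 * u)).
    + exists u, (a1 u), (a2 u). split; [lia|]. left. split; [lia|]. split; assumption.
    + exists v, (a1 v), (a2 v). split; [lia|]. left. split; [lia|]. split; assumption.
Qed.

Lemma nat_root_bracket (e Q : nat) : e <> 0%nat -> exists n, (n ^ e <= Q < (n + 1) ^ e)%nat.
Proof.
  intros He. induction Q as [|Q [n [Hlo Hhi]]].
  - exists 0%nat. rewrite Nat.pow_0_l, Nat.add_0_l, Nat.pow_1_l by exact He. lia.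
  - destruct (Nat.lt_ge_cases (S Q) ((n + 1) ^ e)).
    + exists n. lia.
    + exists (n + 1)%nat. pose proof (Nat.pow_lt_mono_l (n + 1) (n + 1 + 1) e He ltac:(lia)).
      lia.
Qed.

Lemma Rpower_le_of_fifth_root (Q n : nat) (e : R) : (1 <= n)%nat -> (1 <= Q)%nat ->
  (Q < (n + 1) ^ 5)%nat -> e <= 3 / 5 -> Rpower (INR Q) e <= 8 * INR n ^ 3.
Proof.
  intros Hn HQ0 HQ He.
  assert (HQ1 : 1 <= INR Q) by (apply (le_INR 1); exact HQ0).
  assert (Hn1 : 1 <= INR n) by (apply (le_INR 1); exact Hn).
  assert (Hn0 : 0 < INR (n + 1)) by (apply lt_0_INR; lia).
  apply (Rle_trans _ (Rpower (INR Q) (3 / 5))); [now apply Rle_Rpower|].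
  apply (Rle_trans _ (Rpower (INR (n + 1) ^ 5) (3 / 5))).
  - apply Rle_Rpower_l; [lra|]. rewrite <- pow_INR.
    split; [lra|]. apply le_INR; lia.
  - rewrite <- Rpower_pow, Rpower_mult by exact Hn0.
    replace (INR 5 * (3 / 5)) with (INR 3) by (simpl; field).
    rewrite Rpower_pow, plus_INR by exact Hn0. simpl. nra.
Qed.

Lemma sim_approx_quotient_le (z1 z2 : R) (q : nat) (a1 a2 : Z) (D c S : R) :
  (0 < q)%nat -> 0 < D -> 0 < S -> sim_approx (/ D) z1 z2 q a1 a2 -> S <= c * D * INR q ->
  Rmax (Rabs (z1 - IZR a1 / INR q)) (Rabs (z2 - IZR a2 / INR q)) <= c / S.
Proof.
  intros Hq HD HS [E1 E2] HSc. pose proof (lt_0_INR q Hq) as Hq'.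
  assert (Hquot : forall z a, Rabs (INR q * z - IZR a) < / D ->
                    Rabs (z - IZR a / INR q) <= c / S).
  { intros z a Ha.
    replace (z - IZR a / INR q) with ((INR q * z - IZR a) / INR q) by (field; lra).
    unfold Rdiv. rewrite Rabs_mult, (Rabs_pos_eq (/ INR q)) by (left; now apply Rinv_0_lt_compat).
    apply (Rmult_le_reg_l (D * INR q * S)); [apply Rmult_lt_0_compat; [apply Rmult_lt_0_compat|]; lra|].
    replace (D * INR q * S * (Rabs (INR q * z - IZR a) * / INR q))
      with (S * (D * Rabs (INR q * z - IZR a))) by (field; lra).
    replace (D * INR q * S * (c * / S)) with (c * D * INR q) by (field; lra).
    apply (Rmult_lt_compat_l D) in Ha; [|lra]. rewrite Rinv_r in Ha by lra.
    pose proof (Rabs_pos (INR q * z - IZR a)). nra. }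
  apply Rmax_lub; apply Hquot; assumption.
Qed.

Lemma large_denominator_quality (n q : nat) (P : R) :
  (n * n < 2 * q)%nat -> P <= 8 * INR n ^ 3 ->
  sqrt (INR q) * P <= 16 * (INR n * INR n) * INR q.
Proof.
  intros Hnq HP.
  apply lt_INR in Hnq. rewrite !mult_INR in Hnq. simpl in Hnq.
  pose proof (pos_INR n). pose proof (sqrt_pos (INR q)) as Hs0.
  pose proof (sqrt_sqrt (INR q) (pos_INR q)) as Hs.
  assert (Hn : INR n <= 2 * sqrt (INR q)).
  { apply Rnot_lt_le; intros Hlt.
    assert (2 * sqrt (INR q) * (2 * sqrt (INR q)) < INR n * INR n)
      by (apply Rmult_le_0_lt_compat; lra). nra. }
  assert (sqrt (INR q) * P <= sqrt (INR q) * (8 * INR n ^ 3))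
    by (apply Rmult_le_compat_l; lra).
  assert (INR n * sqrt (INR q) <= 2 * INR q) by nra.
  simpl in *. nra.
Qed.

Lemma refined_denominator_quality (n q : nat) (P : R) :
  (1 <= q)%nat -> P <= 8 * INR n ^ 3 ->
  sqrt (INR q) * P <= 16 * (INR n * INR n * INR n) * INR q.
Proof.
  intros Hq HP.
  pose proof (le_INR 1 q Hq) as Hq1. simpl in Hq1. pose proof (pos_INR n).
  pose proof (sqrt_pos (INR q)). pose proof (sqrt_sqrt (INR q) ltac:(lra)).
  assert (sqrt (INR q) <= INR q) by nra.
  assert (sqrt (INR q) * P <= sqrt (INR q) * (8 * INR n ^ 3))
    by (apply Rmult_le_compat_l; lra).
  assert (0 <= INR n ^ 3) by (apply pow_le; lra).
  assert (sqrt (INR q) * (8 * INR n ^ 3) <= INR q * (8 * INR n ^ 3))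
    by (apply Rmult_le_compat_r; lra).
  replace (INR n * INR n * INR n) with (INR n ^ 3) by ring. nra.
Qed.

Theorem lemma2p5 :
  exists C : R,
    forall gamma : R, 0 < gamma < 1 / 15 ->
      exists Q0 : nat,
        forall (zeta1 zeta2 : R), -1 <= zeta1 <= 1 -> -1 <= zeta2 <= 1 ->
        forall Q : nat, (Q0 <= Q)%nat ->
          exists (q : nat) (a1 a2 : Z),
            (1 <= q <= Q)%nat /\
            Rmax (Rabs (zeta1 - IZR a1 / INR q)) (Rabs (zeta2 - IZR a2 / INR q))
              <= C / (sqrt (INR q) * Rpower (INR Q) (1 / 2 + gamma)).
Proof.
  exists 16. intros gamma Hgamma. exists 1%nat. intros z1 z2 _ _ Q HQ.
  destruct (nat_root_bracket 5 Q ltac:(lia)) as [n [Hlo Hhi]].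
  assert (Hn : (1 <= n)%nat) by (destruct n; [simpl in Hhi; lia | lia]).
  set (P := Rpower (INR Q) (1 / 2 + gamma)).
  assert (HP0 : 0 < P) by apply exp_pos.
  assert (HP : P <= 8 * INR n ^ 3) by (apply Rpower_le_of_fifth_root; lra + lia).
  destruct (large_or_refined_denominator z1 z2 (n * n) n ltac:(nia) ltac:(lia))
    as [q [a1 [a2 [Hq Happ]]]].
  exists q, a1, a2. split; [simpl in Hlo; nia|].
  assert (Hq0 : 0 < sqrt (INR q)) by (apply sqrt_lt_R0, lt_0_INR; lia).
  pose proof (lt_0_INR n ltac:(lia)).
  rewrite mult_INR in Happ.
  destruct Happ as [[Hlarge Happ] | Happ];
    (eapply sim_approx_quotient_le; [| | | exact Happ |]; [lia | nra | nra |]).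
  - now apply large_denominator_quality.
  - apply refined_denominator_quality; [lia | exact HP].
Qed.
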